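(* Let $(X,\mu,T)$ be a probability-preserving system and $\mathcal{P}$ a finite Borel partition of $X$. Then there is a function $g:\mathbb{N}\cup\{0\}\to[0,\infty)$ with $g(m)=o(m)$ as $m\to\infty$ such that for all bounded (possibly empty) discrete intervals $I,J\subseteq\mathbb{Z}$ for which $I\cup J$ is a discrete interval, \[\mathrm{I}_\mu(\mathcal{P}^J;\mathcal{P}^I\,|\,\mathcal{P}^{I\cap J})\le g(|J\setminus I|).\]
   Context: $\mathcal{P}^F=\bigvee_{n\in F}T^{-n}\mathcal{P}$ for finite $F\subseteq\mathbb{Z}$ (the trivial partition if $F=\emptyset$). $\mathrm{I}_\mu(\cdot;\cdot\,|\,\cdot)$ is conditional mutual information: $\mathrm{I}_\mu(\mathcal{A};\mathcal{B}\,|\,\mathcal{C})=\mathrm{H}_\mu(\mathcal{A}\,|\,\mathcal{C})-\mathrm{H}_\mu(\mathcal{A}\,|\,\mathcal{B}\vee\mathcal{C})$. *)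

From Stdlib Require Import Reals ZArith List.
Open Scope R_scope.
Import ListNotations.

Definition sigma_algebra {X : Type} (M : (X -> Prop) -> Prop) : Prop :=
  M (fun _ => True) /\
  (forall A, M A -> M (fun x => ~ A x)) /\
  (forall A : nat -> X -> Prop, (forall n, M (A n)) -> M (fun x => exists n, A n x)).

Definition probability_measure {X : Type} (M : (X -> Prop) -> Prop)
  (mu : (X -> Prop) -> R) : Prop :=
  sigma_algebra M /\
  (forall A, M A -> 0 <= mu A) /\
  mu (fun _ => True) = 1 /\
  (forall A : nat -> X -> Prop,
     (forall n, M (A n)) ->
     (forall n m x, n <> m -> A n x -> A m x -> False) ->
     infinite_sum (fun n => mu (A n)) (mu (fun x => exists n, A n x))).

Definition measurable_map {X : Type} (M : (X -> Prop) -> Prop) (f : X -> X) : Prop :=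
  forall A, M A -> M (fun x => A (f x)).

Definition ppsystem {X : Type} (M : (X -> Prop) -> Prop) (mu : (X -> Prop) -> R)
  (T Tinv : X -> X) : Prop :=
  probability_measure M mu /\
  measurable_map M T /\ measurable_map M Tinv /\
  (forall x, T (Tinv x) = x) /\ (forall x, Tinv (T x) = x) /\
  (forall A, M A -> mu (fun x => A (T x)) = mu A).

Definition Tz {X : Type} (T Tinv : X -> X) (n : Z) : X -> X :=
  match n with
  | Z0 => fun x => x
  | Zpos p => Nat.iter (Pos.to_nat p) T
  | Zneg p => Nat.iter (Pos.to_nat p) Tinv
  end.

(* A finite measurable partition with k cells is given by a labelling
   p : X -> nat with values < k; its cells are {x | p x = i}, i < k. *)
Definition finite_partition {X : Type} (M : (X -> Prop) -> Prop) (k : nat)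
  (p : X -> nat) : Prop :=
  (forall x, (p x < k)%nat) /\ (forall i, M (fun x => p x = i)).

(* P^F = \/_{n in F} T^{-n} P : labelling x |-> (p (T^n x))_{n in F} *)
Definition joinP {X : Type} (T Tinv : X -> X) (p : X -> nat) (F : list Z)
  : X -> list nat :=
  fun x => map (fun n => p (Tz T Tinv n x)) F.

(* all possible labels of P^F when |F| = m : words of length m over {0..k-1} *)
Fixpoint words (k m : nat) : list (list nat) :=
  match m with
  | O => [[]]
  | S m' => flat_map (fun i => map (cons i) (words k m')) (seq 0 k)
  end.

Definition sumR {A : Type} (l : list A) (f : A -> R) : R :=
  fold_right Rplus 0 (map f l).

Definition ent_term (m mc : R) : R :=
  if Rle_dec m 0 then 0 else - m * ln (m / mc).

(* H_mu(A | C) for finite partitions given by labellings a, c whose label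
   sets are enumerated (without repetition) by la, lc *)
Definition Hcond {X A C : Type} (mu : (X -> Prop) -> R)
  (a : X -> A) (la : list A) (c : X -> C) (lc : list C) : R :=
  sumR la (fun u => sumR lc (fun v =>
     ent_term (mu (fun x => a x = u /\ c x = v)) (mu (fun x => c x = v)))).

Definition Icond {X A B C : Type} (mu : (X -> Prop) -> R)
  (a : X -> A) (la : list A) (b : X -> B) (lb : list B)
  (c : X -> C) (lc : list C) : R :=
  Hcond mu a la c lc
  - Hcond mu a la (fun x => (b x, c x)) (list_prod lb lc).

Definition Ipart {X : Type} (mu : (X -> Prop) -> R) (T Tinv : X -> X)
  (k : nat) (p : X -> nat) (J I K : list Z) : R :=
  Icond mu (joinP T Tinv p J) (words k (length J))
           (joinP T Tinv p I) (words k (length I))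
           (joinP T Tinv p K) (words k (length K)).

(* Zinterval a b = [a, b) = {a, a+1, ..., b-1} (empty if b <= a) *)
Definition Zinterval (a b : Z) : list Z :=
  map (fun i => (a + Z.of_nat i)%Z) (seq 0 (Z.to_nat (b - a))).

Definition is_Zinterval (S : Z -> Prop) : Prop :=
  exists a b : Z, forall n, S n <-> (a <= n < b)%Z.

Definition Zinter (I J : list Z) : list Z :=
  filter (fun n => existsb (Z.eqb n) J) I.

Definition Zdiff (J I : list Z) : list Z :=
  filter (fun n => negb (existsb (Z.eqb n) I)) J.

From Stdlib Require Import Reals ZArith List Lia Lra Permutation.
From Stdlib Require Import Classical FunctionalExtensionality PropExtensionality.
Open Scope R_scope.
Import ListNotations.

(* Write [h n] for the entropy of [P^{[0,n)}].  By stationarity the entropy of [P^F] is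
   invariant under translating [F], so if [I], [J] and [I ∪ J] are intervals, with
   [s = |I ∩ J|], [t = |I \ J|], [m = |J \ I|], the chain rule gives
     I(P^J ; P^I | P^{I∩J}) = h(s+m) - h(s) - h(s+t+m) + h(s+t).
   Submodularity of entropy makes [h] concave, so its increments decrease to the entropy
   rate [l]; the expression is therefore at most [h m - h 0 - m l], which is [o(m)]. *)

Lemma pred_ext {X : Type} (P Q : X -> Prop) : (forall x, P x <-> Q x) -> P = Q.
Proof.
  intro H; apply functional_extensionality; intro x; apply propositional_extensionality; auto.
Qed.

Lemma measure_ext {X : Type} (mu : (X -> Prop) -> R) (P Q : X -> Prop) :
  (forall x, P x <-> Q x) -> mu P = mu Q.
Proof. intro H; now rewrite (pred_ext P Q H). Qed.

Lemma measurable_ext {X : Type} (M : (X -> Prop) -> Prop) (P Q : X -> Prop) :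
  (forall x, P x <-> Q x) -> M P -> M Q.
Proof. intro H; now rewrite (pred_ext P Q H). Qed.

Lemma sumR_cons {A} (a : A) l f : sumR (a :: l) f = f a + sumR l f.
Proof. reflexivity. Qed.

Lemma sumR_app {A} (l1 l2 : list A) f : sumR (l1 ++ l2) f = sumR l1 f + sumR l2 f.
Proof.
  induction l1 as [|a l1 IH]; [unfold sumR; simpl; ring|].
  simpl; rewrite !sumR_cons, IH; ring.
Qed.

Lemma sumR_ext {A} (l : list A) f g : (forall x, In x l -> f x = g x) -> sumR l f = sumR l g.
Proof.
  intro H; unfold sumR; f_equal; apply map_ext_in; exact H.
Qed.

Lemma sumR_plus {A} (l : list A) f g : sumR l (fun x => f x + g x) = sumR l f + sumR l g.
Proof. induction l; [unfold sumR; simpl; ring|]. rewrite !sumR_cons, IHl; ring. Qed.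

Lemma sumR_scal {A} (l : list A) c f : sumR l (fun x => c * f x) = c * sumR l f.
Proof. induction l; [unfold sumR; simpl; ring|]. rewrite !sumR_cons, IHl; ring. Qed.

Lemma sumR_opp {A} (l : list A) f : sumR l (fun x => - f x) = - sumR l f.
Proof. induction l; [unfold sumR; simpl; ring|]. rewrite !sumR_cons, IHl; ring. Qed.

Lemma sumR_le {A} (l : list A) f g : (forall x, In x l -> f x <= g x) -> sumR l f <= sumR l g.
Proof.
  induction l as [|a l IH]; intro H; [unfold sumR; simpl; lra|].
  rewrite !sumR_cons.
  assert (f a <= g a) by (apply H; left; auto).
  assert (sumR l f <= sumR l g) by (apply IH; intros; apply H; right; auto).
  lra.
Qed.

Lemma sumR_zero {A} (l : list A) f : (forall x, In x l -> f x = 0) -> sumR l f = 0.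
Proof.
  induction l as [|a l IH]; intro H; [reflexivity|].
  rewrite sumR_cons, H, IH; [ring| |left]; auto. intros; apply H; right; auto.
Qed.

Lemma sumR_list_prod {A B} (la : list A) (lb : list B) F :
  sumR (list_prod la lb) F = sumR la (fun u => sumR lb (fun v => F (u, v))).
Proof.
  induction la as [|a la IH]; [reflexivity|].
  simpl list_prod; rewrite sumR_app, sumR_cons, IH.
  unfold sumR at 1; rewrite map_map; reflexivity.
Qed.

Lemma sumR_comm {A B} (la : list A) (lb : list B) F :
  sumR la (fun u => sumR lb (fun v => F u v)) = sumR lb (fun v => sumR la (fun u => F u v)).
Proof.
  induction la as [|a la IH].
  - symmetry; apply sumR_zero; reflexivity.
  - rewrite sumR_cons, IH, <- sumR_plus; apply sumR_ext; reflexivity.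
Qed.

Lemma sumR_single {A} (l : list A) f v0 : NoDup l -> In v0 l ->
  (forall v, In v l -> v <> v0 -> f v = 0) -> sumR l f = f v0.
Proof.
  induction l as [|a l IH]; intros Hnd Hin H; [destruct Hin|].
  inversion Hnd; subst. rewrite sumR_cons. destruct Hin as [<-|Hin].
  - rewrite sumR_zero; [ring|]. intros v Hv. apply H; [right; auto|]. intros ->; auto.
  - rewrite IH, H; auto; [ring|left; auto| |]. { intros ->; auto. }
    intros v Hv; apply H; right; auto.
Qed.

Section SigmaAlgebra.

Context {X : Type} (M : (X -> Prop) -> Prop).
Hypothesis HM : sigma_algebra M.

Lemma measurable_compl (A : X -> Prop) : M A -> M (fun x => ~ A x).
Proof. apply HM. Qed.

Lemma measurable_empty : M (fun _ => False).
Proof.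
  apply (measurable_ext M (fun x => ~ True)); [intro; tauto|].
  apply measurable_compl, HM.
Qed.

Lemma measurable_union (A B : X -> Prop) : M A -> M B -> M (fun x => A x \/ B x).
Proof.
  intros HA HB.
  apply (measurable_ext M (fun x => exists n, (if Nat.eqb n 0 then A else B) x)).
  - intro x; split.
    + intros [n Hn]; destruct (Nat.eqb n 0); auto.
    + intros [H|H]; [exists 0%nat|exists 1%nat]; auto.
  - apply HM; intro n; destruct (Nat.eqb n 0); auto.
Qed.

Lemma measurable_inter (A B : X -> Prop) : M A -> M B -> M (fun x => A x /\ B x).
Proof.
  intros HA HB.
  apply (measurable_ext M (fun x => ~ (~ A x \/ ~ B x))).
  - intro x; split; [intro H; split; apply NNPP; tauto|tauto].
  - apply measurable_compl, measurable_union; apply measurable_compl; auto.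
Qed.

Lemma measurable_preimage_in {B} (g : X -> B) l :
  (forall u, M (fun x => g x = u)) -> M (fun x => In (g x) l).
Proof.
  intro Hg; induction l as [|a l IH]; [apply measurable_empty|].
  apply (measurable_ext M (fun x => g x = a \/ In (g x) l)); [simpl; firstorder|].
  apply measurable_union; auto.
Qed.

End SigmaAlgebra.

Section ProbabilityMeasure.

Context {X : Type} {M : (X -> Prop) -> Prop} {mu : (X -> Prop) -> R}.
Hypothesis Hmu : probability_measure M mu.
Let HM : sigma_algebra M := proj1 Hmu.

Lemma measure_ge0 (A : X -> Prop) : M A -> 0 <= mu A.
Proof. apply Hmu. Qed.

(* Countable additivity for the constant family [fun _ => False] makes the partial
   sums [n * c] of its measure [c] converge to [c], hence [c = 0]. *)
Lemma measure_empty : mu (fun _ => False) = 0.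
Proof.
  pose proof Hmu as (_ & _ & _ & Hadd).
  pose proof (Hadd (fun _ _ => False) (fun _ => measurable_empty M HM)
                   (fun _ _ _ _ h _ => h)) as Hsum.
  rewrite (measure_ext mu _ (fun _ => False)) in Hsum by (intro; firstorder).
  set (c := mu (fun _ => False)) in *.
  assert (c0 : 0 <= c) by (apply measure_ge0, measurable_empty, HM).
  destruct (Req_dec c 0) as [E|E]; auto.
  destruct (Hsum c) as [N HN]; [lra|].
  specialize (HN (S N) ltac:(lia)). rewrite sum_cte in HN.
  unfold R_dist in HN. rewrite !S_INR in HN. pose proof (pos_INR N).
  rewrite Rabs_right in HN; nra.
Qed.

Lemma measure_null (A : X -> Prop) : (forall x, ~ A x) -> mu A = 0.
Proof.
  intro H; rewrite (measure_ext mu A (fun _ => False)); [apply measure_empty|firstorder].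
Qed.

Lemma measure_add (A B : X -> Prop) : M A -> M B ->
  (forall x, A x -> B x -> False) -> mu (fun x => A x \/ B x) = mu A + mu B.
Proof.
  intros HA HB Hd. pose proof Hmu as (_ & _ & _ & Hadd).
  set (F := fun n : nat => match n with 0%nat => A | 1%nat => B | _ => fun _ => False end).
  assert (HF : forall n, M (F n)) by (intros [|[|n]]; simpl; auto; apply measurable_empty, HM).
  assert (Hdj : forall n m x, n <> m -> F n x -> F m x -> False).
  { intros [|[|n]] [|[|m]] x Hnm; simpl; try tauto; try lia; eauto. }
  pose proof (Hadd F HF Hdj) as Hs.
  rewrite (measure_ext mu _ (fun x => A x \/ B x)) in Hs.
  2:{ intro x; split.
      - intros [[|[|n]] h]; simpl in h; tauto.
      - intros [h|h]; [exists 0%nat|exists 1%nat]; auto. }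
  apply (uniqueness_sum (fun n => mu (F n))); auto.
  intros eps Heps. exists 1%nat. intros n Hn.
  replace (sum_f_R0 (fun n => mu (F n)) n) with (mu A + mu B).
  { unfold R_dist; rewrite Rminus_diag, Rabs_R0; auto. }
  induction n as [|n IH]; [lia|]. destruct n as [|n]; [reflexivity|].
  rewrite tech5, <- IH by lia. simpl; rewrite measure_empty; ring.
Qed.

Lemma measure_mono (A B : X -> Prop) : M A -> M B ->
  (forall x, A x -> B x) -> mu A <= mu B.
Proof.
  intros HA HB Hi.
  assert (HBA : M (fun x => B x /\ ~ A x))
    by (apply measurable_inter, measurable_compl; auto).
  rewrite (measure_ext mu B (fun x => A x \/ (B x /\ ~ A x))).
  - rewrite measure_add by (auto; tauto).
    pose proof (measure_ge0 _ HBA); lra.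
  - intro x; destruct (classic (A x)); firstorder.
Qed.

Lemma sumR_measure_preimage_in {B} (S : X -> Prop) (g : X -> B) l :
  M S -> (forall u, M (fun x => g x = u)) -> NoDup l ->
  sumR l (fun v => mu (fun x => S x /\ g x = v)) = mu (fun x => S x /\ In (g x) l).
Proof.
  intros HS Hg Hnd. induction l as [|a l IH].
  - symmetry; apply measure_null; simpl; tauto.
  - inversion Hnd; subst. rewrite sumR_cons, IH by auto.
    rewrite (measure_ext mu (fun x => S x /\ In (g x) (a :: l))
                            (fun x => (S x /\ g x = a) \/ (S x /\ In (g x) l))) by (simpl; firstorder).
    symmetry; apply measure_add.
    + apply measurable_inter; auto.
    + apply measurable_inter, measurable_preimage_in; auto.
    + intros x [_ h1] [_ h2]; subst; auto.
Qed.

Lemma sumR_measure_preimage {B} (S : X -> Prop) (g : X -> B) l :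
  M S -> (forall u, M (fun x => g x = u)) -> NoDup l -> (forall x, In (g x) l) ->
  sumR l (fun v => mu (fun x => S x /\ g x = v)) = mu S.
Proof.
  intros; rewrite sumR_measure_preimage_in by auto; apply measure_ext; firstorder.
Qed.

End ProbabilityMeasure.

Definition negxlnx (x : R) : R := - (x * ln x).

Definition entropy {X A} (mu : (X -> Prop) -> R) (f : X -> A) (lf : list A) : R :=
  sumR lf (fun u => negxlnx (mu (fun x => f x = u))).

Definition measurable_labelling {X A} (M : (X -> Prop) -> Prop) (f : X -> A) (lf : list A) :=
  NoDup lf /\ (forall x, In (f x) lf) /\ (forall u, M (fun x => f x = u)).

Lemma NoDup_list_prod {A B} (la : list A) (lb : list B) :
  NoDup la -> NoDup lb -> NoDup (list_prod la lb).
Proof.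
  induction la as [|a la IH]; intros H1 H2; simpl; [constructor|].
  inversion H1; subst. apply NoDup_app; auto.
  - apply FinFun.Injective_map_NoDup; auto. intros x y E; inversion E; auto.
  - intros [u v] Hi Hi2. apply in_map_iff in Hi. destruct Hi as [w [E _]]. inversion E; subst.
    apply in_prod_iff in Hi2. tauto.
Qed.

Lemma measurable_labelling_pair {X A B} M (f : X -> A) lf (g : X -> B) lg :
  sigma_algebra M -> measurable_labelling M f lf -> measurable_labelling M g lg ->
  measurable_labelling M (fun x => (f x, g x)) (list_prod lf lg).
Proof.
  intros HM (F1&F2&F3) (G1&G2&G3). split; [|split].
  - apply NoDup_list_prod; auto.
  - intro x. apply in_prod_iff; auto.
  - intros [u v]. apply (measurable_ext M (fun x => f x = u /\ g x = v)).
    + intro x; split; [intros [-> ->]; auto|intro E; inversion E; auto].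
    + apply measurable_inter; auto.
Qed.

Lemma entropy_pair {X A B} (mu : (X -> Prop) -> R) (f : X -> A) lf (g : X -> B) lg :
  entropy mu (fun x => (f x, g x)) (list_prod lf lg) =
  sumR lf (fun u => sumR lg (fun v => negxlnx (mu (fun x => f x = u /\ g x = v)))).
Proof.
  unfold entropy. rewrite sumR_list_prod.
  apply sumR_ext; intros u _; apply sumR_ext; intros v _.
  f_equal; apply measure_ext; intro x; split; [intro E; inversion E; auto|intros [-> ->]; auto].
Qed.

Lemma entropy_pair_comm {X A B} (mu : (X -> Prop) -> R) (f : X -> A) lf (g : X -> B) lg :
  entropy mu (fun x => (f x, g x)) (list_prod lf lg) =
  entropy mu (fun x => (g x, f x)) (list_prod lg lf).
Proof.
  rewrite !entropy_pair, sumR_comm.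
  apply sumR_ext; intros; apply sumR_ext; intros; f_equal; apply measure_ext; tauto.
Qed.

Lemma negxlnx0 : negxlnx 0 = 0.
Proof. unfold negxlnx; ring. Qed.

Lemma ln_le_sub1 t : 0 < t -> ln t <= t - 1.
Proof. intro H. pose proof (exp_ineq1_le (ln t)) as E. rewrite exp_ln in E by auto. lra. Qed.

(* [ln t <= t - 1] at [t = y z / (x W)]. *)
Lemma gibbs_pointwise x y z W : 0 <= x -> x <= y -> x <= z -> y <= W -> z <= W ->
  negxlnx x + - (x * ln W) <= - (x * ln y) + - (x * ln z) + (y * z * / W - x).
Proof.
  intros H0 H1 H2 H3 H4. unfold negxlnx.
  destruct (Req_dec x 0) as [->|Hx].
  - assert (0 <= / W).
    { destruct (Req_dec W 0) as [->|]; [rewrite Rinv_0; lra|]. left; apply Rinv_0_lt_compat; lra. }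
    assert (0 <= y * z) by nra. nra.
  - set (t := y * z * / (x * W)).
    assert (Ht : 0 < t) by (unfold t; apply Rmult_lt_0_compat; [nra|apply Rinv_0_lt_compat; nra]).
    assert (Hl : ln t = ln y + ln z - ln x - ln W).
    { unfold t. rewrite ln_mult, ln_mult, ln_Rinv, ln_mult by (try apply Rinv_0_lt_compat; nra). ring. }
    pose proof (ln_le_sub1 t Ht) as Hle. rewrite Hl in Hle.
    assert (x * t = y * z * / W) by (unfold t; field; lra).
    nra.
Qed.

Definition sumR3 {A B C} (la : list A) (lb : list B) (lc : list C) (F : B -> A -> C -> R) : R :=
  sumR lb (fun v => sumR la (fun u => sumR lc (fun w => F v u w))).

Lemma sumR3_plus {A B C} la lb lc (F G : B -> A -> C -> R) :
  @sumR3 A B C la lb lc (fun v u w => F v u w + G v u w) = sumR3 la lb lc F + sumR3 la lb lc G.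
Proof.
  unfold sumR3. rewrite <- sumR_plus. apply sumR_ext; intros.
  rewrite <- sumR_plus. apply sumR_ext; intros. apply sumR_plus.
Qed.

Lemma sumR3_le {A B C} la lb lc (F G : B -> A -> C -> R) :
  (forall v u w, F v u w <= G v u w) -> @sumR3 A B C la lb lc F <= sumR3 la lb lc G.
Proof. intro H. unfold sumR3. repeat (apply sumR_le; intros). auto. Qed.

Lemma sumR3_gibbs_slack {A B C} la lb lc (x3 : B -> A -> C -> R) y z W :
  (forall v u, sumR lc (fun w => x3 v u w) = y v u) ->
  (forall v, sumR la (fun u => y v u) = W v) ->
  (forall v, sumR lc (fun w => z v w) = W v) ->
  @sumR3 A B C la lb lc (fun v u w => y v u * z v w * / W v - x3 v u w) = 0.
Proof.
  intros x3_c y_a z_c. unfold sumR3. apply sumR_zero. intros v _.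
  rewrite (sumR_ext la _ (fun u => y v u * / W v * W v - y v u)).
  2:{ intros u _. rewrite (sumR_ext lc _ (fun w => (y v u * / W v) * z v w + - x3 v u w)) by (intros; ring).
      rewrite sumR_plus, sumR_scal, sumR_opp, z_c, x3_c. ring. }
  rewrite (sumR_ext la _ (fun u => (/ W v * W v) * y v u + - y v u)) by (intros; ring).
  rewrite sumR_plus, sumR_scal, sumR_opp, y_a.
  destruct (Req_dec (W v) 0) as [E|E]; [rewrite E; ring|field; auto].
Qed.

Section Entropy.

Context {X : Type} {M : (X -> Prop) -> Prop} {mu : (X -> Prop) -> R}.
Hypothesis Hmu : probability_measure M mu.
Let HM : sigma_algebra M := proj1 Hmu.

Lemma entropy_pair_of_function {A B} (f : X -> A) lf (g : X -> B) lg (h : A -> B) :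
  measurable_labelling M f lf -> measurable_labelling M g lg -> (forall x, g x = h (f x)) ->
  entropy mu (fun x => (f x, g x)) (list_prod lf lg) = entropy mu f lf.
Proof.
  intros (F1&F2&F3) (G1&G2&G3) Hh. rewrite entropy_pair. unfold entropy.
  apply sumR_ext; intros u _.
  assert (Hnull : forall v, v <> h u -> negxlnx (mu (fun x => f x = u /\ g x = v)) = 0).
  { intros v Hv; rewrite (measure_null Hmu), negxlnx0; auto.
    intros x [E1 E2]; apply Hv; rewrite <- E2, Hh, E1; auto. }
  destruct (classic (In (h u) lg)) as [Hi|Hi].
  - rewrite (sumR_single _ _ (h u)); auto.
    f_equal; apply measure_ext; intro x; split; [tauto|]. intro E; split; auto; rewrite Hh, E; auto.
  - rewrite sumR_zero.
    + rewrite (measure_null Hmu), negxlnx0; auto. intros x E; apply Hi; rewrite <- E, <- Hh; auto.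
    + intros v Hv; apply Hnull; intros ->; auto.
Qed.

Lemma entropy_relabel {A B} (f : X -> A) lf (g : X -> B) lg (h : A -> B) (h' : B -> A) :
  measurable_labelling M f lf -> measurable_labelling M g lg ->
  (forall x, g x = h (f x)) -> (forall x, f x = h' (g x)) ->
  entropy mu f lf = entropy mu g lg.
Proof.
  intros; rewrite <- (entropy_pair_of_function f lf g lg h), entropy_pair_comm,
    (entropy_pair_of_function g lg f lf h'); auto.
Qed.

Lemma negxlnx_measure_split {A B} (f : X -> A) lf (g : X -> B) v :
  measurable_labelling M f lf -> M (fun x => g x = v) ->
  negxlnx (mu (fun x => g x = v)) =
  sumR lf (fun u => - (mu (fun x => f x = u /\ g x = v) * ln (mu (fun x => g x = v)))).
Proof.
  intros (F1&F2&F3) Hv.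
  rewrite sumR_opp, (sumR_ext lf _ (fun u => ln (mu (fun x => g x = v)) *
                                              mu (fun x => g x = v /\ f x = u))).
  - rewrite sumR_scal, (sumR_measure_preimage Hmu) by auto. unfold negxlnx; ring.
  - intros u _; rewrite Rmult_comm; f_equal; apply measure_ext; tauto.
Qed.

Lemma ent_term_split m mc : 0 <= m -> m <= mc -> ent_term m mc = negxlnx m + m * ln mc.
Proof.
  intros H1 H2. unfold ent_term, negxlnx. destruct (Rle_dec m 0).
  - replace m with 0 by lra; ring.
  - unfold Rdiv; rewrite ln_mult, ln_Rinv by (try apply Rinv_0_lt_compat; lra); ring.
Qed.

Lemma Hcond_chain {A C} (a : X -> A) la (c : X -> C) lc :
  measurable_labelling M a la -> measurable_labelling M c lc ->
  Hcond mu a la c lc = entropy mu (fun x => (a x, c x)) (list_prod la lc) - entropy mu c lc.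
Proof.
  intros Ha Hc. pose proof Ha as (A1&A2&A3). pose proof Hc as (C1&C2&C3).
  unfold Hcond. rewrite entropy_pair.
  transitivity (sumR lc (fun v => sumR la (fun u =>
     negxlnx (mu (fun x => a x = u /\ c x = v))
     - - (mu (fun x => a x = u /\ c x = v) * ln (mu (fun x => c x = v)))))).
  - rewrite sumR_comm; apply sumR_ext; intros v _; apply sumR_ext; intros u _.
    rewrite ent_term_split; [ring| |].
    + apply (measure_ge0 Hmu), measurable_inter; auto.
    + apply (measure_mono Hmu); [apply measurable_inter| |]; auto; tauto.
  - rewrite (sumR_comm la lc). unfold entropy, Rminus; rewrite <- sumR_opp, <- sumR_plus.
    apply sumR_ext; intros v _.
    rewrite (negxlnx_measure_split a la c v), <- sumR_opp, <- sumR_plus by auto.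
    reflexivity.
Qed.

Lemma entropy_le_pair {A B} (f : X -> A) lf (g : X -> B) lg :
  measurable_labelling M f lf -> measurable_labelling M g lg ->
  entropy mu g lg <= entropy mu (fun x => (f x, g x)) (list_prod lf lg).
Proof.
  intros Hf Hg. pose proof Hf as (A1&A2&A3). pose proof Hg as (C1&C2&C3).
  rewrite entropy_pair, sumR_comm. unfold entropy. apply sumR_le; intros v _.
  rewrite (negxlnx_measure_split f lf g v) by auto. apply sumR_le; intros u _.
  set (m := mu (fun x => f x = u /\ g x = v)). set (mc := mu (fun x => g x = v)).
  assert (0 <= m) by (apply (measure_ge0 Hmu), measurable_inter; auto).
  assert (m <= mc) by (apply (measure_mono Hmu); [apply measurable_inter| |]; auto; tauto).
  unfold negxlnx. destruct (Req_dec m 0) as [->|Hm]; [lra|].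
  assert (ln m <= ln mc) by (destruct (Req_dec m mc) as [<-|]; [lra|left; apply ln_increasing; lra]).
  nra.
Qed.

Lemma entropy_submodular {A B C} (a : X -> A) la (b : X -> B) lb (c : X -> C) lc :
  measurable_labelling M a la -> measurable_labelling M b lb -> measurable_labelling M c lc ->
  entropy mu (fun x => (a x, (b x, c x))) (list_prod la (list_prod lb lc)) + entropy mu b lb <=
  entropy mu (fun x => (a x, b x)) (list_prod la lb) +
  entropy mu (fun x => (b x, c x)) (list_prod lb lc).
Proof.
  intros (A1&A2&A3) (B1&B2&B3) (C1&C2&C3).
  set (x3 := fun v u w => mu (fun x => a x = u /\ b x = v /\ c x = w)).
  set (y := fun v u => mu (fun x => a x = u /\ b x = v)).
  set (z := fun v w => mu (fun x => b x = v /\ c x = w)).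
  set (W := fun v => mu (fun x => b x = v)).
  assert (Mab : forall u v, M (fun x => a x = u /\ b x = v)) by (intros; apply measurable_inter; auto).
  assert (Mbc : forall v w, M (fun x => b x = v /\ c x = w)) by (intros; apply measurable_inter; auto).
  assert (x3_c : forall v u, sumR lc (fun w => x3 v u w) = y v u).
  { intros v u. unfold y. rewrite <- (sumR_measure_preimage Hmu (fun x => a x = u /\ b x = v) c lc) by auto.
    apply sumR_ext; intros; unfold x3, y; apply measure_ext; tauto. }
  assert (y_a : forall v, sumR la (fun u => y v u) = W v).
  { intros v. unfold W. rewrite <- (sumR_measure_preimage Hmu (fun x => b x = v) a la) by auto.
    apply sumR_ext; intros; unfold y; apply measure_ext; tauto. }
  assert (x3_a : forall v w, sumR la (fun u => x3 v u w) = z v w).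
  { intros v w. unfold z. rewrite <- (sumR_measure_preimage Hmu (fun x => b x = v /\ c x = w) a la) by auto.
    apply sumR_ext; intros; unfold x3; apply measure_ext; tauto. }
  assert (z_c : forall v, sumR lc (fun w => z v w) = W v)
    by (intros v; unfold z, W; apply (sumR_measure_preimage Hmu); auto).
  assert (Eabc : entropy mu (fun x => (a x, (b x, c x))) (list_prod la (list_prod lb lc)) =
                 sumR3 la lb lc (fun v u w => negxlnx (x3 v u w))).
  { rewrite entropy_pair, sumR_comm, sumR_list_prod. unfold sumR3. apply sumR_ext; intros v _.
    rewrite sumR_comm. apply sumR_ext; intros u _. apply sumR_ext; intros w _.
    unfold x3; f_equal; apply measure_ext.
    intro x; split; [intros [h1 h2]; inversion h2; auto|intros (->&->&->); auto]. }
  assert (Eb : entropy mu b lb = sumR3 la lb lc (fun v u w => - (x3 v u w * ln (W v)))).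
  { unfold entropy, sumR3. apply sumR_ext; intros v _.
    rewrite (sumR_ext la _ (fun u => - (ln (W v) * y v u))).
    2:{ intros u _. rewrite sumR_opp, <- x3_c, <- sumR_scal. f_equal; apply sumR_ext; intros; ring. }
    rewrite sumR_opp, sumR_scal, y_a. unfold negxlnx, W. ring. }
  assert (Eab : entropy mu (fun x => (a x, b x)) (list_prod la lb) =
                sumR3 la lb lc (fun v u w => - (x3 v u w * ln (y v u)))).
  { rewrite entropy_pair, sumR_comm. unfold sumR3. apply sumR_ext; intros v _. apply sumR_ext; intros u _.
    rewrite sumR_opp, (sumR_ext lc _ (fun w => ln (y v u) * x3 v u w)) by (intros; ring).
    rewrite sumR_scal, x3_c. unfold negxlnx, y. ring. }
  assert (Ebc : entropy mu (fun x => (b x, c x)) (list_prod lb lc) =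
                sumR3 la lb lc (fun v u w => - (x3 v u w * ln (z v w)))).
  { rewrite entropy_pair. unfold sumR3. apply sumR_ext; intros v _. rewrite sumR_comm. apply sumR_ext; intros w _.
    rewrite sumR_opp, (sumR_ext la _ (fun u => ln (z v w) * x3 v u w)) by (intros; ring).
    rewrite sumR_scal, x3_a. unfold negxlnx, z. ring. }
  pose proof (sumR3_gibbs_slack la lb lc x3 y z W x3_c y_a z_c) as Eslack.
  rewrite Eabc, Eb, Eab, Ebc, <- sumR3_plus, <- (Rplus_0_r (_ + _)), <- Eslack, <- !sumR3_plus.
  apply sumR3_le; intros v u w. apply gibbs_pointwise; unfold x3, y, z, W.
  - apply (measure_ge0 Hmu), measurable_inter; auto.
  - apply (measure_mono Hmu); auto; [apply measurable_inter|]; auto; tauto.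
  - apply (measure_mono Hmu); auto; [apply measurable_inter|]; auto; tauto.
  - apply (measure_mono Hmu); auto; tauto.
  - apply (measure_mono Hmu); auto; tauto.
Qed.

End Entropy.

Lemma Tz_succ_r {X} (T Tinv : X -> X) n x : (forall x, Tinv (T x) = x) ->
  Tz T Tinv (n + 1) x = Tz T Tinv n (T x).
Proof.
  intro Hinv.
  assert (Tz_iter : forall m y, Tz T Tinv m y =
    if (0 <=? m)%Z then Nat.iter (Z.to_nat m) T y else Nat.iter (Z.to_nat (- m)) Tinv y)
    by (intros [] ?; reflexivity).
  rewrite !Tz_iter.
  destruct (Z.leb_spec 0 n), (Z.leb_spec 0 (n + 1)); try lia.
  - replace (Z.to_nat (n + 1)) with (S (Z.to_nat n)) by lia.
    rewrite Nat.iter_succ_r; reflexivity.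
  - replace n with (-1)%Z by lia; simpl; auto.
  - replace (Z.to_nat (- n)) with (S (Z.to_nat (- (n + 1)))) by lia.
    rewrite Nat.iter_succ_r, Hinv; reflexivity.
Qed.

Lemma measurable_map_iter {X} M (f : X -> X) n :
  measurable_map M f -> measurable_map M (Nat.iter n f).
Proof.
  intro Hf; induction n as [|n IH]; intros A HA; simpl; auto.
  apply (IH (fun y => A (f y))), Hf, HA.
Qed.

Lemma measurable_map_Tz {X} M (T Tinv : X -> X) n :
  measurable_map M T -> measurable_map M Tinv -> measurable_map M (Tz T Tinv n).
Proof. intros HT HTi; destruct n; simpl; [intros A HA; exact HA| |]; apply measurable_map_iter; auto. Qed.

Lemma NoDup_words k m : NoDup (words k m).
Proof.
  induction m as [|m IH]; simpl; [repeat constructor; auto|].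
  generalize (seq_NoDup k 0); generalize (seq 0 k).
  induction l as [|i l IHl]; intro Hl; simpl; [constructor|].
  inversion Hl; subst. apply NoDup_app; auto.
  - apply FinFun.Injective_map_NoDup; auto. intros x y E; inversion E; auto.
  - intros w Hw Hw2. apply in_map_iff in Hw. destruct Hw as [v [<- _]].
    apply in_flat_map in Hw2. destruct Hw2 as [j [Hj Hv]]. apply in_map_iff in Hv.
    destruct Hv as [v' [E _]]. inversion E; subst; auto.
Qed.

Lemma In_words k m u : length u = m -> (forall i, In i u -> (i < k)%nat) -> In u (words k m).
Proof.
  revert u; induction m as [|m IH]; intros [|i u] Hl Hk; try discriminate; simpl; auto.
  apply in_flat_map; exists i; split.
  - apply in_seq; assert (i < k)%nat by (apply Hk; left; auto); lia.
  - apply in_map, IH; [simpl in Hl; lia|]. intros; apply Hk; right; auto.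
Qed.

(* Position of [n] in [L]; [sel L F] reads off the [F]-coordinates of a word indexed by [L]. *)
Fixpoint zidx (n : Z) (L : list Z) : nat :=
  match L with [] => 0%nat | a :: L' => if Z.eq_dec n a then 0%nat else S (zidx n L') end.

Definition sel (L F : list Z) (u : list nat) : list nat := map (fun n => nth (zidx n L) u 0%nat) F.

Lemma joinP_sel {X} (T Tinv : X -> X) p F L x : incl F L ->
  joinP T Tinv p F x = sel L F (joinP T Tinv p L x).
Proof.
  intro H. unfold sel, joinP. apply map_ext_in; intros n Hn.
  specialize (H n Hn). induction L as [|a L IH]; [destruct H|]. simpl.
  destruct (Z.eq_dec n a) as [->|Hne]; auto. apply IH. destruct H; [congruence|auto].
Qed.

Lemma joinP_app {X} (T Tinv : X -> X) p F G x :
  joinP T Tinv p (F ++ G) x = joinP T Tinv p F x ++ joinP T Tinv p G x.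
Proof. apply map_app. Qed.

Lemma In_Zinterval a b n : In n (Zinterval a b) <-> (a <= n < b)%Z.
Proof.
  unfold Zinterval. rewrite in_map_iff. split.
  - intros [i [<- Hi]]. apply in_seq in Hi. lia.
  - intro H. exists (Z.to_nat (n - a)). split; [lia|]. apply in_seq. lia.
Qed.

Lemma NoDup_Zinterval a b : NoDup (Zinterval a b).
Proof. apply FinFun.Injective_map_NoDup; [intros x y E; lia|apply seq_NoDup]. Qed.

Lemma length_Zinterval a b : length (Zinterval a b) = Z.to_nat (b - a).
Proof. unfold Zinterval. rewrite length_map, length_seq. reflexivity. Qed.

Section Stationarity.

Context {X : Type} {M : (X -> Prop) -> Prop} {mu : (X -> Prop) -> R} {T Tinv : X -> X}
  {k : nat} {p : X -> nat}.
Hypotheses (Hsys : ppsystem M mu T Tinv) (Hpart : finite_partition M k p).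
Let Hmu : probability_measure M mu := proj1 Hsys.
Let HM : sigma_algebra M := proj1 Hmu.

Lemma measurable_labelling_joinP F :
  measurable_labelling M (joinP T Tinv p F) (words k (length F)).
Proof.
  pose proof Hsys as (_&HT&HTi&_); pose proof Hpart as [Hk Hp]. split; [apply NoDup_words|split].
  - intro x; apply In_words; [apply length_map|].
    intros i Hi; apply in_map_iff in Hi; destruct Hi as [n [<- _]]; apply Hk.
  - induction F as [|n F IH]; intros [|i u].
    + apply (measurable_ext M (fun _ => True)); [intro; unfold joinP; simpl; tauto|apply HM].
    + apply (measurable_ext M (fun _ => False)); [|apply measurable_empty, HM].
      intro; unfold joinP; simpl; split; [tauto|discriminate].
    + apply (measurable_ext M (fun _ => False)); [|apply measurable_empty, HM].
      intro; simpl; split; [tauto|discriminate].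
    + apply (measurable_ext M (fun x => p (Tz T Tinv n x) = i /\ joinP T Tinv p F x = u)).
      { intro x; simpl; split; [intros [-> ->]; auto|intro E; inversion E; auto]. }
      apply measurable_inter; auto. apply (measurable_map_Tz M T Tinv n HT HTi (fun y => p y = i)), Hp.
Qed.

Definition HP (F : list Z) : R := entropy mu (joinP T Tinv p F) (words k (length F)).

Lemma HP_relabel {A} (f : X -> A) lf F (h : A -> list nat) (h' : list nat -> A) :
  measurable_labelling M f lf -> (forall x, joinP T Tinv p F x = h (f x)) ->
  (forall x, f x = h' (joinP T Tinv p F x)) -> entropy mu f lf = HP F.
Proof. intros; apply (entropy_relabel Hmu f lf _ _ h h'); auto using measurable_labelling_joinP. Qed.

Lemma HP_perm F G : (forall n, In n F <-> In n G) -> HP F = HP G.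
Proof.
  intro H; apply (HP_relabel _ _ G (sel F G) (sel G F)); [apply measurable_labelling_joinP| |];
    intro x; apply joinP_sel; intros n Hn; apply H; auto.
Qed.

Lemma HP_app F G :
  entropy mu (fun x => (joinP T Tinv p F x, joinP T Tinv p G x))
    (list_prod (words k (length F)) (words k (length G))) = HP (F ++ G).
Proof.
  apply (HP_relabel _ _ _ (fun uv => fst uv ++ snd uv)
           (fun u => (sel (F ++ G) F u, sel (F ++ G) G u))).
  - apply measurable_labelling_pair; auto using measurable_labelling_joinP.
  - intro x; apply joinP_app.
  - intro x; rewrite <- !joinP_sel; auto; intros n Hn; apply in_or_app; auto.
Qed.

Lemma HP_app3 F G K :
  entropy mu (fun x => (joinP T Tinv p F x, (joinP T Tinv p G x, joinP T Tinv p K x)))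
    (list_prod (words k (length F)) (list_prod (words k (length G)) (words k (length K))))
  = HP (F ++ G ++ K).
Proof.
  apply (HP_relabel _ _ _ (fun uv => fst uv ++ fst (snd uv) ++ snd (snd uv))
     (fun u => (sel (F ++ G ++ K) F u, (sel (F ++ G ++ K) G u, sel (F ++ G ++ K) K u)))).
  - repeat apply measurable_labelling_pair; auto using measurable_labelling_joinP.
  - intro x; simpl; rewrite !joinP_app; auto.
  - intro x; rewrite <- !joinP_sel; auto; intros n Hn; rewrite !in_app_iff; auto.
Qed.

Lemma HP_shift1 F : HP (map (fun n => (n + 1)%Z) F) = HP F.
Proof.
  pose proof Hsys as (_&_&_&_&Hinv&Hpres).
  unfold HP, entropy; rewrite length_map. apply sumR_ext; intros u _. f_equal.
  rewrite (measure_ext mu _ (fun x => (fun y => joinP T Tinv p F y = u) (T x))).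
  - apply (Hpres (fun y => joinP T Tinv p F y = u)), measurable_labelling_joinP.
  - intro x; unfold joinP; rewrite map_map, (map_ext _ (fun n => p (Tz T Tinv n (T x)))); [tauto|].
    intro n; rewrite Tz_succ_r; auto.
Qed.

Lemma HP_shift F s : HP (map (fun n => (n + s)%Z) F) = HP F.
Proof.
  assert (Hnat : forall G j, HP (map (fun n => (n + Z.of_nat j)%Z) G) = HP G).
  { intros G j; induction j as [|j IH].
    - f_equal; rewrite (map_ext _ (fun n => n)) by (intro; lia); apply map_id.
    - rewrite <- IH, <- (HP_shift1 (map (fun n => (n + Z.of_nat j)%Z) G)), map_map.
      f_equal; apply map_ext; intro; lia. }
  destruct (Z.leb_spec 0 s).
  - rewrite <- (Hnat F (Z.to_nat s)); f_equal; apply map_ext; intro; lia.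
  - rewrite <- (Hnat _ (Z.to_nat (- s))), map_map.
    rewrite (map_ext _ (fun n => n)) by (intro; lia); f_equal; apply map_id.
Qed.

Definition Hblock (n : nat) : R := HP (Zinterval 0 (Z.of_nat n)).

Lemma HP_interval F c n : (forall m, In m F <-> (c <= m < c + Z.of_nat n)%Z) -> HP F = Hblock n.
Proof.
  intro H. unfold Hblock. rewrite <- (HP_shift (Zinterval 0 (Z.of_nat n)) c).
  apply HP_perm. intro m. rewrite H, in_map_iff. split.
  - intro Hm. exists (m - c)%Z. rewrite In_Zinterval. lia.
  - intros [m' [<- Hm']]. rewrite In_Zinterval in Hm'. lia.
Qed.

Lemma HP_interval_length F c e : NoDup F -> (forall m, In m F <-> (c <= m < e)%Z) ->
  HP F = Hblock (length F).
Proof.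
  intros Hnd H.
  assert (E : length F = Z.to_nat (e - c)).
  { rewrite <- length_Zinterval. apply Permutation_length, NoDup_Permutation; auto using NoDup_Zinterval.
    intro m; rewrite H, In_Zinterval; tauto. }
  apply (HP_interval F c); intro m; rewrite H, E; lia.
Qed.

Lemma Hblock_mono n : Hblock n <= Hblock (S n).
Proof.
  pose proof (entropy_le_pair Hmu _ _ _ _ (measurable_labelling_joinP [0%Z])
     (measurable_labelling_joinP (Zinterval 1 (1 + Z.of_nat n)))) as H.
  rewrite HP_app in H. fold (HP (Zinterval 1 (1 + Z.of_nat n))) in H.
  rewrite (HP_interval (Zinterval 1 _) 1 n) in H by (intro m; rewrite In_Zinterval; lia).
  rewrite (HP_interval ([0%Z] ++ _) 0 (S n)) in H by (intro m; cbn [app In]; rewrite In_Zinterval; lia).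
  exact H.
Qed.

Lemma Hblock_concave n : Hblock (S (S n)) + Hblock n <= Hblock (S n) + Hblock (S n).
Proof.
  pose proof (entropy_submodular Hmu _ _ _ _ _ _ (measurable_labelling_joinP [0%Z])
     (measurable_labelling_joinP (Zinterval 1 (1 + Z.of_nat n)))
     (measurable_labelling_joinP [(1 + Z.of_nat n)%Z])) as H.
  rewrite HP_app3, !HP_app in H. fold (HP (Zinterval 1 (1 + Z.of_nat n))) in H.
  rewrite (HP_interval (Zinterval 1 _) 1 n) in H by (intro m; rewrite In_Zinterval; lia).
  rewrite (HP_interval (_ ++ _ ++ _) 0 (S (S n))) in H
    by (intro m; cbn [app In]; rewrite in_app_iff, In_Zinterval; cbn [app In]; lia).
  rewrite (HP_interval ([0%Z] ++ _) 0 (S n)) in H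
    by (intro m; cbn [app In]; rewrite In_Zinterval; lia).
  rewrite (HP_interval (Zinterval 1 _ ++ _) 1 (S n)) in H
    by (intro m; rewrite in_app_iff, In_Zinterval; cbn [app In]; lia).
  lra.
Qed.

Lemma Ipart_chain J I K :
  Ipart mu T Tinv k p J I K = HP (J ++ K) - HP K - HP (J ++ I ++ K) + HP (I ++ K).
Proof.
  unfold Ipart, Icond.
  rewrite (Hcond_chain Hmu), (Hcond_chain Hmu), HP_app3, !HP_app;
    auto using measurable_labelling_joinP, measurable_labelling_pair.
  fold (HP K); ring.
Qed.

End Stationarity.

Section ConcaveSequence.

Variable h : nat -> R.
Hypothesis h_mono : forall n, h n <= h (S n).
Hypothesis h_concave : forall n, h (S (S n)) + h n <= h (S n) + h (S n).

Let incr n := h (S n) - h n.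

Lemma incr_decreasing : Un_decreasing incr.
Proof. intro n; unfold incr; specialize (h_concave n); lra. Qed.

Lemma incr_shift_le s j : incr (s + j) <= incr j.
Proof.
  induction s as [|s IH]; [apply Rle_refl|].
  pose proof (incr_decreasing (s + j)%nat); rewrite Nat.add_succ_l; lra.
Qed.

Lemma increase_le_initial s m : h (s + m) - h s <= h m - h 0.
Proof.
  induction m as [|m IH]; [rewrite Nat.add_0_r; lra|].
  pose proof (incr_shift_le s m) as E; unfold incr in E.
  rewrite Nat.add_succ_r; lra.
Qed.

Lemma incr_has_lb : has_lb incr.
Proof. exists 0; intros x [n ->]; unfold opp_seq, incr; specialize (h_mono n); lra. Qed.

Section Rate.

Variable l : R.
Hypothesis incr_cv : Un_cv incr l.

Lemma increase_ge_rate s m : INR m * l <= h (s + m) - h s.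
Proof.
  pose proof (decreasing_ineq _ _ incr_decreasing incr_cv) as Hl.
  induction m as [|m IH]; [rewrite Nat.add_0_r; simpl; lra|].
  specialize (Hl (s + m)%nat); unfold incr in Hl.
  rewrite S_INR, Nat.add_succ_r; lra.
Qed.

Lemma increase_sublinear_excess eps : eps > 0 ->
  exists N, forall m, (N <= m)%nat -> h m - h 0 - INR m * l <= eps * INR m.
Proof.
  intro Heps. destruct (incr_cv (eps / 2)) as [N0 HN0]; [lra|].
  set (C := h N0 - h 0 - INR N0 * l).
  assert (Hg : forall d, h (N0 + d) - h 0 - INR (N0 + d) * l <= C + INR d * (eps / 2)).
  { induction d as [|d IH]; [rewrite Nat.add_0_r; simpl; unfold C; lra|].
    specialize (HN0 (N0 + d)%nat ltac:(lia)); unfold R_dist, incr in HN0.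
    apply Rabs_def2 in HN0. rewrite Nat.add_succ_r, !S_INR. lra. }
  destruct (INR_unbounded (C / (eps / 2))) as [N1 HN1].
  exists (N0 + N1)%nat. intros m Hm.
  replace m with (N0 + (m - N0))%nat by lia. eapply Rle_trans; [apply Hg|].
  assert (HC : C <= INR N1 * (eps / 2)).
  { apply (Rmult_le_reg_r (/ (eps / 2))); [apply Rinv_0_lt_compat; lra|].
    replace (INR N1 * (eps / 2) * / (eps / 2)) with (INR N1) by (field; lra).
    unfold Rdiv in HN1; lra. }
  assert (INR N1 <= INR (N0 + (m - N0))) by (apply le_INR; lia).
  assert (INR (m - N0) <= INR (N0 + (m - N0))) by (apply le_INR; lia).
  nra.
Qed.

End Rate.

Lemma concave_second_difference_bound : exists g : nat -> R,
  (forall m, 0 <= g m) /\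
  (forall eps, eps > 0 -> exists N : nat, forall m : nat, (N <= m)%nat -> g m <= eps * INR m) /\
  (forall s t m, h (s + m)%nat - h s - h (s + t + m)%nat + h (s + t)%nat <= g m).
Proof.
  destruct (decreasing_cv incr incr_decreasing incr_has_lb) as [l Hl].
  exists (fun m => h m - h 0 - INR m * l); split; [|split].
  - intro m; pose proof (increase_ge_rate l Hl 0 m); simpl in *; lra.
  - apply increase_sublinear_excess; auto.
  - intros s t m; pose proof (increase_le_initial s m); pose proof (increase_ge_rate l Hl (s + t) m); lra.
Qed.

End ConcaveSequence.

Lemma In_Zinter n I J : In n (Zinter I J) <-> In n I /\ In n J.
Proof.
  unfold Zinter; rewrite filter_In, existsb_exists.
  split; [intros [H [m [Hm E]]]; apply Z.eqb_eq in E; subst; auto|].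
  intros [HI HJ]; split; [|exists n; rewrite Z.eqb_refl]; auto.
Qed.

Lemma In_Zdiff n J I : In n (Zdiff J I) <-> In n J /\ ~ In n I.
Proof.
  unfold Zdiff; rewrite filter_In, Bool.negb_true_iff, <- Bool.not_true_iff_false, existsb_exists.
  split; [intros [H1 H2]; split; auto; intro H; apply H2; exists n; rewrite Z.eqb_refl; auto|].
  intros [H1 H2]; split; auto; intros [m [Hm E]]; apply Z.eqb_eq in E; subst; auto.
Qed.

Lemma length_NoDup_same_elements (l1 l2 : list Z) : NoDup l1 -> NoDup l2 ->
  (forall x, In x l1 <-> In x l2) -> length l1 = length l2.
Proof. intros; apply Permutation_length, NoDup_Permutation; auto. Qed.

Lemma length_Zinter_Zdiff I J : length I = (length (Zinter I J) + length (Zdiff I J))%nat.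
Proof. symmetry; apply filter_length. Qed.

Lemma length_union I J U : NoDup I -> NoDup J -> NoDup U ->
  (forall n, In n U <-> In n I \/ In n J) -> length U = (length I + length (Zdiff J I))%nat.
Proof.
  intros HI HJ HU H. rewrite <- length_app. apply length_NoDup_same_elements; auto.
  - apply NoDup_app; [auto|apply NoDup_filter; auto|].
    intros x Hx Hx2; apply In_Zdiff in Hx2; tauto.
  - intro x; rewrite H, in_app_iff, In_Zdiff; destruct (In_dec Z.eq_dec x I); tauto.
Qed.

Lemma length_Zinter_comm I J : NoDup I -> NoDup J -> length (Zinter I J) = length (Zinter J I).
Proof.
  intros; apply length_NoDup_same_elements; try apply NoDup_filter; auto.
  intro x; rewrite !In_Zinter; tauto.
Qed.

Theorem mainTheorem14 (X : Type) (M : (X -> Prop) -> Prop) (mu : (X -> Prop) -> R)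
  (T Tinv : X -> X) (k : nat) (p : X -> nat) :
  ppsystem M mu T Tinv ->
  finite_partition M k p ->
  exists g : nat -> R,
    (forall m, 0 <= g m) /\
    (forall eps, eps > 0 -> exists N : nat, forall m : nat, (N <= m)%nat ->
        g m <= eps * INR m) /\
    (forall a1 b1 a2 b2 : Z,
       let I := Zinterval a1 b1 in
       let J := Zinterval a2 b2 in
       is_Zinterval (fun n => In n I \/ In n J) ->
       Ipart mu T Tinv k p J I (Zinter I J) <= g (length (Zdiff J I))).
Proof.
  intros Hsys Hpart.
  destruct (concave_second_difference_bound _ (Hblock_mono Hsys Hpart) (Hblock_concave Hsys Hpart))
    as [g [g_ge0 [g_sublinear g_bound]]].
  exists g; split; [exact g_ge0|split; [exact g_sublinear|]].
  intros a1 b1 a2 b2 I J [a [b Hab]].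
  set (K := Zinter I J).
  assert (NI : NoDup I) by apply NoDup_Zinterval.
  assert (NJ : NoDup J) by apply NoDup_Zinterval.
  assert (NK : NoDup K) by (apply NoDup_filter; auto).
  assert (HK : forall n, In n K <-> In n I /\ In n J) by (intro; apply In_Zinter).
  assert (Hab' : forall n, In n (Zinterval a b) <-> In n I \/ In n J)
    by (intro n; rewrite In_Zinterval; symmetry; apply Hab).
  rewrite (Ipart_chain Hsys Hpart).
  rewrite (HP_perm Hsys Hpart (J ++ K) J) by (intro n; rewrite in_app_iff, HK; tauto).
  rewrite (HP_perm Hsys Hpart (I ++ K) I) by (intro n; rewrite in_app_iff, HK; tauto).
  rewrite (HP_perm Hsys Hpart (J ++ I ++ K) (Zinterval a b))
    by (intro n; rewrite !in_app_iff, HK, Hab'; tauto).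
  rewrite (HP_interval_length Hsys Hpart I a1 b1 NI (In_Zinterval a1 b1)),
    (HP_interval_length Hsys Hpart J a2 b2 NJ (In_Zinterval a2 b2)),
    (HP_interval_length Hsys Hpart _ a b (NoDup_Zinterval a b) (In_Zinterval a b)).
  rewrite (HP_interval_length Hsys Hpart K (Z.max a1 a2) (Z.min b1 b2) NK)
    by (intro n; rewrite HK; unfold I, J; rewrite !In_Zinterval; lia).
  rewrite (length_union I J (Zinterval a b)), (length_Zinter_Zdiff I J),
    (length_Zinter_Zdiff J I), (length_Zinter_comm J I)
    by (auto using NoDup_Zinterval; intro n; rewrite <- Hab; tauto).
  apply g_bound.
Qed.
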